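(* Let $(L,\delta,\alpha,\beta)$ be a BiHom-Lie algebra, let $(V,\alpha_V,\beta_V)$ be an abelian BiHom-Lie algebra, and let $d\colon (L\oplus V)\times(L\oplus V)\to L\oplus V$ be a bilinear map. Let $i_0\colon V\to L\oplus V$, $i_0(v)=v$, and $\pi_0\colon L\oplus V\to L$, $\pi_0(x+v)=x$. Then $(L\oplus V,d,\alpha+\alpha_V,\beta+\beta_V)$ is a BiHom-Lie algebra and $$0\longrightarrow (V,\alpha_V,\beta_V)\xrightarrow{\ i_0\ }(L\oplus V,d,\alpha+\alpha_V,\beta+\beta_V)\xrightarrow{\ \pi_0\ }(L,\delta,\alpha,\beta)\longrightarrow 0$$ is an extension of $L$ by $V$ if and only if there exist bilinear maps $\lambda_l\colon L\times V\to V$, $\lambda_r\colon V\times L\to V$ and $\theta\colon L\times L\to V$ such that $$d(x+v,y+w)=\delta(x,y)+\theta(x,y)+\lambda_l(x,w)+\lambda_r(v,y)\quad\text{for all }x,y\in L,\ v,w\in V,$$ $(\lambda_l,\lambda_r)$ is a representation of $L$ on $V$, and $\theta$ is a $2$-cocycle of $L$ on $V$ with respect to this representation.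
   Context: All vector spaces are over a field $\mathbb{K}$. A BiHom-Lie algebra $(L,[\cdot,\cdot],\alpha,\beta)$ is a vector space $L$ with a bilinear map $[\cdot,\cdot]\colon L\times L\to L$ and linear maps $\alpha,\beta\colon L\to L$ such that $\alpha\circ\beta=\beta\circ\alpha$, $[\beta(x),\alpha(y)]=-[\beta(y),\alpha(x)]$, and $[\beta^2(x),[\beta(y),\alpha(z)]]+[\beta^2(y),[\beta(z),\alpha(x)]]+[\beta^2(z),[\beta(x),\alpha(y)]]=0$ for all $x,y,z\in L$ ($\alpha,\beta$ need not be multiplicative). A morphism $f\colon(L,[\cdot,\cdot],\alpha,\beta)\to(L',[\cdot,\cdot]',\alpha',\beta')$ is a linear map with $f\circ\alpha=\alpha'\circ f$, $f\circ\beta=\beta'\circ f$, $f([x,y])=[f(x),f(y)]'$. An abelian BiHom-Lie algebra $(V,\alpha_V,\beta_V)$ is a BiHom-Lie algebra whose bracket is identically zero (so $\alpha_V,\beta_V$ are commuting linear maps). On $L\oplus V$, $\alpha+\alpha_V$ denotes $x+v\mapsto \alpha(x)+\alpha_V(v)$, and similarly $\beta+\beta_V$. An extension of $(L,\delta,\alpha,\beta)$ by $(V,\mu,\alpha_V,\beta_V)$ is a sequence $0\to V\xrightarrow{i}M\xrightarrow{\pi}L\to 0$ of BiHom-Lie algebras and BiHom-Lie morphisms with $i$ injective, $\pi$ surjective and $\mathrm{Im}(i)=\ker(\pi)$. A representation of the BiHom-Lie algebra $(L,\delta,\alpha,\beta)$ on the abelian BiHom-Lie algebra $(V,\alpha_V,\beta_V)$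 is a pair of bilinear maps $\lambda_l\colon L\times V\to V$, $\lambda_r\colon V\times L\to V$ such that for all $x,y\in L$, $v\in V$: $\lambda_r(\beta_V(v),\alpha(y))=-\lambda_l(\beta(y),\alpha_V(v))$ and $\lambda_l(\beta^2(x),\lambda_l(\beta(y),\alpha_V(v)))+\lambda_l(\beta^2(y),\lambda_r(\beta_V(v),\alpha(x)))+\lambda_r(\beta_V^2(v),\delta(\beta(x),\alpha(y)))=0$. Given such a representation, a $2$-cocycle of $L$ on $V$ is a bilinear map $\theta\colon L\times L\to V$ with $\theta(\beta(x),\alpha(y))=-\theta(\beta(y),\alpha(x))$ and $\theta(\beta^2(x),\delta(\beta(y),\alpha(z)))-\theta(\beta^2(y),\delta(\beta(x),\alpha(z)))+\theta(\beta^2(z),\delta(\beta(x),\alpha(y)))+\lambda_l(\beta^2(x),\theta(\beta(y),\alpha(z)))-\lambda_l(\beta^2(y),\theta(\beta(x),\alpha(z)))+\lambda_l(\beta^2(z),\theta(\beta(x),\alpha(y)))=0$ for all $x,y,z\in L$. *)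

From HB Require Import structures.
From mathcomp Require Import all_boot all_algebra.
Set Implicit Arguments. Unset Strict Implicit. Unset Printing Implicit Defensive.
Import GRing.Theory.
Local Open Scope ring_scope.

(* Vector spaces over a field K are lmodType K; L (+) V is the product (L * V). *)

Definition is_lin (K : fieldType) (U W : lmodType K) (f : U -> W) : Prop :=
  forall (a : K) (x y : U), f (a *: x + y) = a *: f x + f y.

Definition is_bilin (K : fieldType) (U W X : lmodType K) (f : U -> W -> X) : Prop :=
  (forall y, is_lin (fun x => f x y)) /\ (forall x, is_lin (f x)).

Definition BiHomLie (K : fieldType) (L : lmodType K)
    (br : L -> L -> L) (al be : L -> L) : Prop :=
  ((is_bilin br) /\ (is_lin al) /\ (is_lin be) /\ ((forall x, al (be x) = be (al x))) /\ ((forall x y, br (be x) (al y) = - br (be y) (al x)) /\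
      (forall x y z,
         br (be (be x)) (br (be y) (al z)) + br (be (be y)) (br (be z) (al x))
         + br (be (be z)) (br (be x) (al y)) = 0))).

(* abelian BiHom-Lie algebra: zero bracket *)
Definition zero_br (K : fieldType) (V : lmodType K) : V -> V -> V := fun _ _ => 0.

Definition BiHomLie_morphism (K : fieldType) (L L' : lmodType K)
    (br : L -> L -> L) (al be : L -> L)
    (br' : L' -> L' -> L') (al' be' : L' -> L') (f : L -> L') : Prop :=
  ((is_lin f) /\ ((forall x, f (al x) = al' (f x))) /\ ((forall x, f (be x) = be' (f x)) /\
      (forall x y, f (br x y) = br' (f x) (f y)))).

Definition is_extension (K : fieldType) (L V M : lmodType K)
    (brL : L -> L -> L) (aL bL : L -> L)
    (brV : V -> V -> V) (aV bV : V -> V)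
    (brM : M -> M -> M) (aM bM : M -> M)
    (i : V -> M) (p : M -> L) : Prop :=
  ((BiHomLie brV aV bV) /\ (BiHomLie brM aM bM) /\ (BiHomLie brL aL bL) /\ (BiHomLie_morphism brV aV bV brM aM bM i) /\ (BiHomLie_morphism brM aM bM brL aL bL p) /\ (injective i) /\ ((forall x, exists m, p m = x) /\
      (forall m, (exists v, i v = m) <-> p m = 0))).

Definition is_representation (K : fieldType) (L V : lmodType K)
    (dL : L -> L -> L) (al be : L -> L) (aV bV : V -> V)
    (ll : L -> V -> V) (lr : V -> L -> V) : Prop :=
  ((is_bilin ll) /\ (is_bilin lr) /\ ((forall y v, lr (bV v) (al y) = - ll (be y) (aV v)) /\
      (forall x y v,
         ll (be (be x)) (ll (be y) (aV v)) + ll (be (be y)) (lr (bV v) (al x))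
         + lr (bV (bV v)) (dL (be x) (al y)) = 0))).

Definition is_2cocycle (K : fieldType) (L V : lmodType K)
    (dL : L -> L -> L) (al be : L -> L)
    (ll : L -> V -> V) (th : L -> L -> V) : Prop :=
  ((is_bilin th) /\ ((forall x y, th (be x) (al y) = - th (be y) (al x)) /\
      (forall x y z,
         th (be (be x)) (dL (be y) (al z)) - th (be (be y)) (dL (be x) (al z))
         + th (be (be z)) (dL (be x) (al y))
         + ll (be (be x)) (th (be y) (al z)) - ll (be (be y)) (th (be x) (al z))
         + ll (be (be z)) (th (be x) (al y)) = 0))).

Definition sum_map (K : fieldType) (L V : lmodType K) (f : L -> L) (g : V -> V)
  : (L * V)%type -> (L * V)%type := fun m => (f m.1, g m.2).

From mathcomp Require Import all_boot all_algebra.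
Import GRing.Theory.
Set Implicit Arguments.
Unset Strict Implicit.
Local Open Scope ring_scope.

(* Since the projection is a
   morphism, the L-component of d is delta; since the inclusion is a morphism,
   V is abelian inside L (+) V; bilinearity then splits the V-component as
   theta(x, y) + ll(x, w) + lr(v, y).  In the BiHom skew-symmetry and Jacobi
   identities of L (+) V, the V-component separates by degree in V: the part
   of degree 0 is the skew-symmetry and (cyclic form of the) cocycle identity
   of theta, and the part of degree 1 is a sum of one representation identity
   for each V-argument. *)

Section Linearity.
Variables (K : fieldType) (U W : lmodType K) (f : U -> W).
Hypothesis f_lin : is_lin f.

Lemma is_linD : {morph f : x y / x + y}.
Proof. by move=> x y; rewrite -[x]scale1r f_lin !scale1r. Qed.

Lemma is_lin0 : f 0 = 0.
Proof. by apply/(addrI (f 0)); rewrite -is_linD !addr0. Qed.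

Lemma is_linN : {morph f : x / - x}.
Proof. by move=> x; apply/(addrI (f x)); rewrite -is_linD !subrr is_lin0. Qed.

End Linearity.

Lemma is_lin_comp (K : fieldType) (A B C : lmodType K) (f : B -> C) (g : A -> B) :
  is_lin f -> is_lin g -> is_lin (f \o g).
Proof. by move=> hf hg a x y /=; rewrite hg hf. Qed.

Lemma is_bilin_comp (K : fieldType) (A B C A' B' C' : lmodType K)
    (f : A -> B -> C) (g : A' -> A) (h : B' -> B) (k : C -> C') :
  is_bilin f -> is_lin g -> is_lin h -> is_lin k ->
  is_bilin (fun a b => k (f (g a) (h b))).
Proof.
move=> [fl fr] hg hh hk; split=> [b|a].
- exact (is_lin_comp hk (is_lin_comp (fl (h b)) hg)).
- exact (is_lin_comp hk (is_lin_comp (fr (g a)) hh)).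
Qed.

Section Bilinearity.
Variables (K : fieldType) (U W X : lmodType K) (f : U -> W -> X).
Hypothesis f_bilin : is_bilin f.

Lemma bilin0l y : f 0 y = 0. Proof. exact (is_lin0 (f_bilin.1 y)). Qed.
Lemma bilin0r x : f x 0 = 0. Proof. exact (is_lin0 (f_bilin.2 x)). Qed.
Lemma bilinDl y : {morph f^~ y : x x' / x + x'}. Proof. exact (is_linD (f_bilin.1 y)). Qed.
Lemma bilinDr x : {morph f x : y y' / y + y'}. Proof. exact (is_linD (f_bilin.2 x)). Qed.
Lemma bilinNr x : {morph f x : y / - y}. Proof. exact (is_linN (f_bilin.2 x)). Qed.

End Bilinearity.

Section SplitSum.
Context {K : fieldType} {L V : lmodType K}.

Lemma is_lin_inl : is_lin (fun x : L => (x, 0 : V)).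
Proof. by move=> a x y; rewrite [RHS]surjective_pairing /= scaler0 addr0. Qed.

Lemma is_lin_inr : is_lin (fun v : V => (0 : L, v)).
Proof. by move=> a x y; rewrite [RHS]surjective_pairing /= scaler0 addr0. Qed.

Lemma is_lin_snd : is_lin (@snd L V).
Proof. by []. Qed.

Lemma is_lin_sum_map (f : L -> L) (g : V -> V) :
  is_lin f -> is_lin g -> is_lin (sum_map f g).
Proof. by move=> hf hg a [x v] [y w]; rewrite /sum_map /= hf hg. Qed.

End SplitSum.

Lemma addr_eq0P (X : zmodType) (a b : X) : a + b = 0 <-> a = - b.
Proof. by split=> [/eqP|->]; [rewrite addr_eq0 => /eqP | rewrite addNr]. Qed.

Definition cyclic_sum (T : Type) (X : nmodType) (f : T -> T -> T -> X) x y z :=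
  f x y z + f y z x + f z x y.

Definition skew_defect (T : Type) (X : nmodType) (br : T -> T -> X) (al be : T -> T)
    x y :=
  br (be x) (al y) + br (be y) (al x).

Definition jacobiator (T : nmodType) (br : T -> T -> T) (al be : T -> T) :=
  cyclic_sum (fun x y z => br (be (be x)) (br (be y) (al z))).

Lemma skew_defect_eq0 (T : Type) (X : zmodType) (br : T -> T -> X) (al be : T -> T) :
  (forall x y, br (be x) (al y) = - br (be y) (al x)) <->
  (forall x y, skew_defect br al be x y = 0).
Proof. by split=> h x y; rewrite ?/skew_defect; apply/addr_eq0P; apply: h. Qed.

Section SplitBracket.
Variables (K : fieldType) (L V : lmodType K).
Variables (delta : L -> L -> L) (al be : L -> L) (aV bV : V -> V).
Variables (ll : L -> V -> V) (lr : V -> L -> V) (th : L -> L -> V).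
Variable d : L * V -> L * V -> L * V.
Hypothesis dE : forall x y v w, d (x, v) (y, w) = (delta x y, th x y + ll x w + lr v y).
Hypotheses (d_bilin : is_bilin d) (delta_BiHomLie : BiHomLie delta al be).
Hypotheses (ll_bilin : is_bilin ll) (lr_bilin : is_bilin lr) (th_bilin : is_bilin th).
Hypotheses (aV_lin : is_lin aV) (bV_lin : is_lin bV).
Hypothesis aV_bV : forall v, aV (bV v) = bV (aV v).

Local Notation alM := (sum_map al aV).
Local Notation beM := (sum_map be bV).

Definition rep_skew_defect y v := lr (bV v) (al y) + ll (be y) (aV v).

Definition rep_jacobiator x y v :=
  ll (be (be x)) (ll (be y) (aV v)) + ll (be (be y)) (lr (bV v) (al x))
  + lr (bV (bV v)) (delta (be x) (al y)).

Definition cocycle_jacobiator :=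
  cyclic_sum (fun x y z =>
    th (be (be x)) (delta (be y) (al z)) + ll (be (be x)) (th (be y) (al z))).

Lemma skew_defect_split x y v w :
  skew_defect d alM beM (x, v) (y, w) =
  (skew_defect delta al be x y,
   skew_defect th al be x y + rep_skew_defect y v + rep_skew_defect x w).
Proof.
rewrite /skew_defect /rep_skew_defect /sum_map /= !dE; congr (_, _).
by rewrite !addrA (@GRing.add V).[ACl 1*4*3*5*6*2].
Qed.

Lemma jacobiator_split x y z u v w :
  jacobiator d alM beM (x, u) (y, v) (z, w) =
  (jacobiator delta al be x y z,
   cocycle_jacobiator x y z + rep_jacobiator y z u + rep_jacobiator z x v
   + rep_jacobiator x y w).
Proof.
rewrite /jacobiator /cyclic_sum /sum_map /= !dE; congr (_, _).
rewrite /= !(bilinDr ll_bilin) /cocycle_jacobiator /rep_jacobiator /cyclic_sum !addrA.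
by rewrite (@GRing.add V).[ACl 1*2*6*7*11*12*8*14*5*13*4*10*3*9*15].
Qed.

Lemma rep_skew_defect0 y : rep_skew_defect y 0 = 0.
Proof.
rewrite /rep_skew_defect (is_lin0 aV_lin) (is_lin0 bV_lin).
by rewrite (bilin0l lr_bilin) (bilin0r ll_bilin) addr0.
Qed.

Lemma rep_jacobiator0 x y : rep_jacobiator x y 0 = 0.
Proof.
rewrite /rep_jacobiator (is_lin0 aV_lin) !(is_lin0 bV_lin) !(bilin0l lr_bilin).
by rewrite !(bilin0r ll_bilin) !addr0.
Qed.

Lemma skew_defect_split_eq0 :
  (forall m n, skew_defect d alM beM m n = 0) <->
  [/\ forall x y, skew_defect delta al be x y = 0,
      forall x y, skew_defect th al be x y = 0
    & forall y v, rep_skew_defect y v = 0].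
Proof.
split=> [skM | [skL skth rep] [x v] [y w]]; last first.
  by rewrite skew_defect_split skL skth !rep !addr0.
have skth x y : skew_defect th al be x y = 0.
  have := congr1 snd (skM (x, 0) (y, 0)).
  by rewrite skew_defect_split !rep_skew_defect0 !addr0.
split=> [x y | // | y v].
  by have := congr1 fst (skM (x, 0) (y, 0)); rewrite skew_defect_split.
have := congr1 snd (skM (0, v) (y, 0)).
by rewrite skew_defect_split skth rep_skew_defect0 add0r addr0.
Qed.

Lemma jacobiator_split_eq0 :
  (forall m n p, jacobiator d alM beM m n p = 0) <->
  [/\ forall x y z, jacobiator delta al be x y z = 0,
      forall x y z, cocycle_jacobiator x y z = 0
    & forall x y v, rep_jacobiator x y v = 0].
Proof.
split=> [jacM | [jacL coc rep] [x u] [y v] [z w]]; last first.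
  by rewrite jacobiator_split jacL coc !rep !addr0.
have coc x y z : cocycle_jacobiator x y z = 0.
  have := congr1 snd (jacM (x, 0) (y, 0) (z, 0)).
  by rewrite jacobiator_split !rep_jacobiator0 !addr0.
split=> [x y z | // | x y w].
  by have := congr1 fst (jacM (x, 0) (y, 0) (z, 0)); rewrite jacobiator_split.
have := congr1 snd (jacM (x, 0) (y, 0) (0, w)).
by rewrite jacobiator_split coc !rep_jacobiator0 !add0r.
Qed.

Lemma cocycle_jacobiatorE :
  (forall x y, th (be x) (al y) = - th (be y) (al x)) ->
  forall x y z,
    th (be (be x)) (delta (be y) (al z)) - th (be (be y)) (delta (be x) (al z))
    + th (be (be z)) (delta (be x) (al y))
    + ll (be (be x)) (th (be y) (al z)) - ll (be (be y)) (th (be x) (al z))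
    + ll (be (be z)) (th (be x) (al y)) = cocycle_jacobiator x y z.
Proof.
have [_ [_ [_ [_ [skL _]]]]] := delta_BiHomLie.
move=> skth x y z; rewrite /cocycle_jacobiator /cyclic_sum.
rewrite (skL z x) (skth z x) (bilinNr th_bilin) (bilinNr ll_bilin) !addrA.
by rewrite (@GRing.add V).[ACl 1*4*2*5*3*6].
Qed.

Lemma BiHomLie_split_bracketE :
  BiHomLie d alM beM <->
  is_representation delta al be aV bV ll lr /\ is_2cocycle delta al be ll th.
Proof.
have [_ [al_lin [be_lin [al_be [skL jacL]]]]] := delta_BiHomLie.
split.
- case=> _ [_ [_ [_ [/skew_defect_eq0/skew_defect_split_eq0[_ skth rep_sk]]]]].
  move=> /jacobiator_split_eq0[_ coc rep_jac].
  have {}skth := (skew_defect_eq0 th al be).2 skth.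
  split.
    split=> //; split=> //; split=> // y v.
    exact/addr_eq0P/rep_sk.
  split=> //; split=> // x y z.
  by rewrite cocycle_jacobiatorE.
- case=> [[_ [_ [rep_sk rep_jac]]] [_ [skth coc]]].
  do 2 split=> //; first exact: is_lin_sum_map.
  split; first exact: is_lin_sum_map.
  split; first by move=> [x v]; rewrite /sum_map /= al_be aV_bV.
  split.
    apply/skew_defect_eq0/skew_defect_split_eq0.
    split=> [||y v]; [exact/skew_defect_eq0 | exact/skew_defect_eq0 |].
    exact/addr_eq0P/rep_sk.
  apply/jacobiator_split_eq0; split=> // x y z.
  by rewrite -cocycle_jacobiatorE.
Qed.

End SplitBracket.

Section SplitSequence.
Variables (K : fieldType) (L V : lmodType K).
Variables (delta : L -> L -> L) (al be : L -> L) (aV bV : V -> V).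
Variable d : L * V -> L * V -> L * V.

Lemma split_is_extensionE :
  BiHomLie (@zero_br K V) aV bV -> BiHomLie d (sum_map al aV) (sum_map be bV) ->
  BiHomLie delta al be ->
  is_extension delta al be (@zero_br K V) aV bV d (sum_map al aV) (sum_map be bV)
    (fun v => (0, v)) (fun m => m.1) <->
  (forall m n, (d m n).1 = delta m.1 n.1) /\ (forall v w, d (0, v) (0, w) = 0).
Proof.
move=> hV hM hL; have [_ [al_lin [be_lin _]]] := hL.
split=> [[_ [_ [_ [[_ [_ [_ i_br]]] [[_ [_ [_ p_br]]] _]]]]] | [d_fst d_V0]].
  by split=> [m n | v w]; rewrite ?p_br // -i_br.
do 3 split=> //; split.
  split; first exact: is_lin_inr.
  split; first by move=> v; rewrite /sum_map (is_lin0 al_lin).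
  by split=> [v | v w]; rewrite ?d_V0 // /sum_map (is_lin0 be_lin).
split; first by do 3 split=> // [[]|[]].
split; first by move=> v w [].
split; first by move=> x; exists (x, 0).
by move=> [x v]; split=> [[w [<- _]] // | /= ->]; exists v.
Qed.

Lemma split_bracket_decomposition :
  is_bilin d -> (forall m n, (d m n).1 = delta m.1 n.1) ->
  (forall v w, d (0, v) (0, w) = 0) ->
  forall x y v w, d (x, v) (y, w) =
    (delta x y, (d (x, 0) (y, 0)).2 + (d (x, 0) (0, w)).2 + (d (0, v) (y, 0)).2).
Proof.
move=> d_bilin d_fst d_V0 x y v w.
have pairD (a : L) (b : V) : (a, b) = (a, 0) + (0, b).
  by rewrite [RHS]surjective_pairing /= addr0 add0r.
rewrite [LHS]surjective_pairing d_fst; congr (_, _).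
by rewrite (pairD x v) (pairD y w) (bilinDl d_bilin) !(bilinDr d_bilin) d_V0 /= addr0.
Qed.

End SplitSequence.

Theorem mainTheorem1 (K : fieldType) (L V : lmodType K)
    (delta : L -> L -> L) (al be : L -> L) (aV bV : V -> V)
    (d : (L * V)%type -> (L * V)%type -> (L * V)%type) :
  BiHomLie delta al be ->
  BiHomLie (@zero_br K V) aV bV ->
  is_bilin d ->
  (BiHomLie d (sum_map al aV) (sum_map be bV) /\
   is_extension delta al be (@zero_br K V) aV bV d (sum_map al aV) (sum_map be bV)
     (fun v : V => ((0 : L), v)) (fun m : (L * V)%type => m.1))
  <->
  (exists (ll : L -> V -> V) (lr : V -> L -> V) (th : L -> L -> V),
     (is_bilin ll) /\ (is_bilin lr) /\ (is_bilin th) /\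
         ((forall (x y : L) (v w : V),
            d (x, v) (y, w) = (delta x y, th x y + ll x w + lr v y))) /\
         (is_representation delta al be aV bV ll lr) /\
         (is_2cocycle delta al be ll th)).
Proof.
move=> hL hV d_bilin; have [_ [aV_lin [bV_lin [aV_bV _]]]] := hV.
split=> [[hM /(split_is_extensionE hV hM hL) [d_fst d_V0]] | ].
  pose ll x w := (d (x, 0) (0, w)).2.
  pose lr v y := (d (0, v) (y, 0)).2.
  pose th x y := (d (x, 0) (y, 0)).2.
  have ll_bilin : is_bilin ll := is_bilin_comp d_bilin is_lin_inl is_lin_inr is_lin_snd.
  have lr_bilin : is_bilin lr := is_bilin_comp d_bilin is_lin_inr is_lin_inl is_lin_snd.
  have th_bilin : is_bilin th := is_bilin_comp d_bilin is_lin_inl is_lin_inl is_lin_snd.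
  have dE := split_bracket_decomposition d_bilin d_fst d_V0.
  have [rep coc] := (BiHomLie_split_bracketE dE d_bilin hL ll_bilin lr_bilin th_bilin
    aV_lin bV_lin aV_bV).1 hM.
  by exists ll, lr, th.
move=> [ll [lr [th [ll_bilin [lr_bilin [th_bilin [dE [rep coc]]]]]]]].
have hM := (BiHomLie_split_bracketE dE d_bilin hL ll_bilin lr_bilin th_bilin
  aV_lin bV_lin aV_bV).2 (conj rep coc).
split=> //; apply/(split_is_extensionE hV hM hL); split=> [[x v] [y w] | v w].
  by rewrite dE.
have [delta_bilin _] := hL.
rewrite dE (bilin0l delta_bilin) (bilin0l th_bilin) (bilin0l ll_bilin).
by rewrite (bilin0r lr_bilin) !addr0.
Qed.
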